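(* Let $\mathbf A$ be a super-paraorthomodular lattice. Then for all $x,y\in A$, if $x\leq y$ then $y\land(y'\lor(x\land x'))=(y\land y')\lor(x\land x')$.
   Context: A pseudo-Kleene lattice is an algebra $(A,\land,\lor,{}',0,1)$ that is a bounded lattice with an antitone involution ${}'$ ($x\leq y\Rightarrow y'\leq x'$, $x''=x$) satisfying $x\land x'\leq y\lor y'$. It is super-paraorthomodular if for all $x,y$: (SP1) $x\leq y$ and $x'\land y=(x\land x')\lor(y\land y')$ imply $y\land(x\lor x')=x\lor(y\land y')$; (SP2) $x\leq y$ implies $(x\land x')\lor(y\land y')=(x'\land y)\land(x'\land y)'$. *)

From mathcomp Require Import all_boot all_order.
Set Implicit Arguments. Unset Strict Implicit. Unset Printing Implicit Defensive.
Import Order.TTheory.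
Local Open Scope order_scope.

(* A pseudo-Kleene lattice: a bounded lattice (carrier T : tbLatticeType,
   meet `&`, join `|`, bottom \bot = 0, top \top = 1) together with an
   operation c (written x' in the paper) that is an antitone involution
   satisfying x /\ x' <= y \/ y'. *)
Definition pseudo_kleene (disp : Order.disp_t) (T : tbLatticeType disp)
  (c : T -> T) : Prop :=
  (forall x y : T, x <= y -> c y <= c x) /\
  (forall x : T, c (c x) = x) /\
  (forall x y : T, x `&` c x <= y `|` c y).

Definition super_paraorthomodular (disp : Order.disp_t) (T : tbLatticeType disp)
  (c : T -> T) : Prop :=
  pseudo_kleene c /\
  (forall x y : T, x <= y ->
     c x `&` y = (x `&` c x) `|` (y `&` c y) ->
     y `&` (x `|` c x) = x `|` (y `&` c y)) /\
  (forall x y : T, x <= y ->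
     (x `&` c x) `|` (y `&` c y) = (c x `&` y) `&` c (c x `&` y)).

From mathcomp Require Import all_boot all_order.
Import Order.TTheory.
Local Open Scope order_scope.

(* The inclusion "right >= left" is the modular inequality, valid in every
   lattice because x /\ x' <= x <= y.  For the other inclusion, (SP2) rewrites
   the right-hand side as (x' /\ y) /\ (x' /\ y)'; the left-hand side lies below
   x' /\ y since y' <= x', and below (x' /\ y)' since both y' and x = x'' are. *)

Lemma modular_inequality (disp : Order.disp_t) (T : latticeType disp) (a b y : T) :
  a <= y -> (y `&` b) `|` a <= y `&` (b `|` a).
Proof.
move=> ay; rewrite leUx !lexI leIl leUr ay !andbT /=.
exact: le_trans (leIr _ _) (leUl _ _).
Qed.

Section AntitoneInvolution.

Variables (disp : Order.disp_t) (T : latticeType disp) (c : T -> T).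
Hypothesis c_anti : forall x y : T, x <= y -> c y <= c x.
Hypothesis cK : forall x : T, c (c x) = x.

Lemma le_c_meetCl (x z : T) : x <= c (c x `&` z).
Proof. by rewrite -{1}[x]cK; apply/c_anti/leIl. Qed.

Lemma c_le_c_meetr (y z : T) : c y <= c (z `&` y).
Proof. exact/c_anti/leIr. Qed.

Lemma meet_joinc_le_meet_c (x y : T) : x <= y ->
  y `&` (c y `|` (x `&` c x)) <= (c x `&` y) `&` c (c x `&` y).
Proof.
move=> xy; rewrite !lexI leIl andbT; apply/andP; split; apply: le_trans (leIr _ _) _.
- by rewrite leUx c_anti // leIr.
- by rewrite leUx c_le_c_meetr (le_trans (leIl _ _) (le_c_meetCl _ _)).
Qed.

End AntitoneInvolution.

Theorem lemma3p3 (disp : Order.disp_t) (T : tbLatticeType disp) (c : T -> T)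
  (HA : super_paraorthomodular c) (x y : T) :
  x <= y -> y `&` (c y `|` (x `&` c x)) = (y `&` c y) `|` (x `&` c x).
Proof.
move=> xy; case: HA => [[c_anti [cK _]] [_ SP2]].
apply/le_anti/andP; split.
- by rewrite [(y `&` c y) `|` _]joinC SP2 //; apply: meet_joinc_le_meet_c.
- by apply: modular_inequality; apply: le_trans xy; apply: leIl.
Qed.
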